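(* Let $N\geq 1$, let $J=\bigoplus_{k=1}^N\begin{bmatrix}0&1\\-1&0\end{bmatrix}$ be the $2N\times 2N$ symplectic form, let $V$ be any real symmetric $2N\times 2N$ matrix, and let $C$ be any complex $2N\times 2N$ matrix. Set $R_C\coloneqq \operatorname{Re}(C^\dagger C)$, $I_C\coloneqq \operatorname{Im}(C^\dagger C)$ (real and imaginary parts taken entrywise) and $\tilde V\coloneqq JV$. Then for every integer $l\geq 0$, $$2\operatorname{tr}\left[I_C J\tilde V^{2l+1}\right]+\operatorname{tr}\left[R_C J\tilde V^{2l}\right]=0,$$ where $\tilde V^{0}$ is the identity matrix.
   Context: In the paper, $V$ is the covariance matrix $V_{kl}=\frac12\langle\{\hat\xi_k,\hat\xi_l\}\rangle$ of an $N$-mode state with quadrature vector $\hat{\vec\xi}=(\hat x_1,\hat p_1,\dots,\hat x_N,\hat p_N)^T$, and $C$ is the matrix whose $k$-th row is the coefficient vector $\vec c_k\in\mathbb{C}^{2N}$ of a linear Lindblad operator $\hat L_k=\vec c_k\cdot\hat{\vec\xi}$. The quantities $2\operatorname{tr}(I_CJ\tilde V^k)+\operatorname{tr}(R_CJ\tilde V^{k-1})$, $k=1,\dots,2N$, are the expressions whose vanishing gives necessary conditions for stabilizability; the theorem says those with odd $k$ vanish identically. *)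

(* Real scalars: an arbitrary real closed field R (e.g. the reals);
   complex scalars: R[i] = complex R from mathcomp-real-closed. *)
From mathcomp Require Import all_boot all_order all_algebra.
From mathcomp Require Import complex.
Set Implicit Arguments. Unset Strict Implicit. Unset Printing Implicit Defensive.
Import Order.TTheory GRing.Theory Num.Theory.
Local Open Scope ring_scope.

(* The 2N x 2N symplectic form J = (+)_{k=1}^N [[0,1],[-1,0]] with 0-based
   indices: J_{2k,2k+1} = 1, J_{2k+1,2k} = -1, all other entries 0. *)
Definition sympJ (R : pzRingType) (N : nat) : 'M[R]_(N.*2) :=
  \matrix_(i, j)
    (if ~~ odd i && (j == i.+1 :> nat) then 1
     else if odd i && (j.+1 == i :> nat) then -1 else 0).

Definition mxpow (R : pzRingType) (n : nat) (A : 'M[R]_n) (k : nat) : 'M[R]_n :=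
  iter k (mulmx A) 1%:M.

Definition adjC (R : rcfType) (m n : nat) (C : 'M[R[i]]_(m, n)) : 'M[R[i]]_(n, m) :=
  \matrix_(i, j) ((C j i)^*)%C.

Definition mxRe (R : rcfType) (m n : nat) (A : 'M[R[i]]_(m, n)) : 'M[R]_(m, n) :=
  \matrix_(i, j) complex.Re (A i j).
Definition mxIm (R : rcfType) (m n : nat) (A : 'M[R[i]]_(m, n)) : 'M[R]_(m, n) :=
  \matrix_(i, j) complex.Im (A i j).

(** The Gram matrix C^† C is Hermitian, so R_C is symmetric and I_C is
    skew-symmetric.  Since J is skew with J^2 = -1 and V is symmetric,
    Ṽ = J V is Hamiltonian (Ṽ^T J = - J Ṽ), hence (J Ṽ^k)^T = (-1)^(k+1) J Ṽ^k:
    J Ṽ^k is symmetric for odd k and skew for even k.  Both traces in the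
    statement are therefore traces of a symmetric times a skew-symmetric
    matrix, and such traces vanish in characteristic 0. *)
From mathcomp Require Import all_boot all_order all_algebra.
From mathcomp Require Import complex.
Set Implicit Arguments. Unset Strict Implicit. Unset Printing Implicit Defensive.
Import Order.TTheory GRing.Theory Num.Theory.
Local Open Scope ring_scope.

Lemma mxtrace_mul_sym_skew (R : numDomainType) (n : nat) (A B : 'M[R]_n) :
  A^T = A -> B^T = - B -> \tr (A *m B) = 0.
Proof.
move=> symA skewB; set t := \tr (A *m B).
have opp_t : t = - t.
  by rewrite {1}/t -mxtrace_tr trmx_mul symA skewB mxtrace_mulC mulmxN raddfN.
have : t *+ 2 = 0 by rewrite mulr2n {1}opp_t addNr.
by move/eqP; rewrite mulrn_eq0 => /eqP.
Qed.

Lemma mxpowS (R : pzRingType) (n : nat) (A : 'M[R]_n) (k : nat) :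
  mxpow A k.+1 = A *m mxpow A k.
Proof. by []. Qed.

Lemma mxpowSr (R : pzRingType) (n : nat) (A : 'M[R]_n) (k : nat) :
  mxpow A k.+1 = mxpow A k *m A.
Proof.
elim: k => [|k IHk]; first by rewrite mxpowS /mxpow /= mulmx1 mul1mx.
by rewrite mxpowS {1}IHk mulmxA -mxpowS.
Qed.

Section Hamiltonian.
Variables (R : comPzRingType) (n : nat) (J : 'M[R]_n).
Hypotheses (skewJ : J^T = - J) (sqrJ : J *m J = - 1%:M).

Definition hamiltonian (A : 'M[R]_n) : Prop := A^T *m J = - (J *m A).

Lemma hamiltonian_mul_sym (V : 'M[R]_n) : V^T = V -> hamiltonian (J *m V).
Proof.
move=> symV; rewrite /hamiltonian trmx_mul symV skewJ mulmxN mulNmx -mulmxA sqrJ.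
by rewrite mulmxA sqrJ mulmxN mulNmx mulmx1 mul1mx.
Qed.

Lemma trmx_mxpow_mulJ (A : 'M[R]_n) (k : nat) : hamiltonian A ->
  (mxpow A k)^T *m J = (-1) ^+ k *: (J *m mxpow A k).
Proof.
move=> hamA; elim: k => [|k IHk]; first by rewrite trmx1 mul1mx mulmx1 scale1r.
rewrite {1}mxpowS trmx_mul -mulmxA hamA mulmxN mulmxA IHk -scalemxAl.
by rewrite -mulmxA -mxpowSr exprS mulN1r scaleNr.
Qed.

Lemma trmx_mulJ_mxpow (A : 'M[R]_n) (k : nat) : hamiltonian A ->
  (J *m mxpow A k)^T = (-1) ^+ k.+1 *: (J *m mxpow A k).
Proof.
by move=> hamA; rewrite trmx_mul skewJ mulmxN trmx_mxpow_mulJ // exprS mulN1r scaleNr.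
Qed.

End Hamiltonian.

Definition partner (i : nat) : nat := if odd i then i.-1 else i.+1.

Lemma odd_partner (i : nat) : odd (partner i) = ~~ odd i.
Proof.
rewrite /partner; case: ifP => odd_i; last by rewrite oddS odd_i.
by rewrite -odd_i -[in RHS](prednK (odd_gt0 odd_i)) oddS negbK.
Qed.

Lemma partnerK : involutive partner.
Proof.
move=> i; rewrite {1}/partner odd_partner /partner.
by case: (boolP (odd i)) => //= odd_i; rewrite prednK ?odd_gt0.
Qed.

Section SymplecticForm.
Variables (R : pzRingType) (N : nat).

Lemma partner_ltn (i : nat) : (i < N.*2)%N -> (partner i < N.*2)%N.
Proof.
move=> lt_i; rewrite /partner; case: ifP => [_|even_i].
  exact: leq_ltn_trans (leq_pred i) lt_i.
rewrite ltn_neqAle lt_i andbT; apply: contraFneq even_i => eq_i.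
by move/(congr1 odd): eq_i; rewrite odd_double /= => /negbFE.
Qed.

Definition partner_ord (i : 'I_(N.*2)) : 'I_(N.*2) := Ordinal (partner_ltn (ltn_ord i)).

Lemma partner_ordK : involutive partner_ord.
Proof. by move=> i; apply: val_inj; exact: partnerK. Qed.

Lemma sympJE (i k : 'I_(N.*2)) :
  sympJ R N i k = (k == partner_ord i)%:R * (-1) ^+ odd i.
Proof.
rewrite mxE -val_eqE /= /partner; case: (boolP (odd i)) => odd_i /=.
  have -> : (k.+1 == i :> nat) = (k == i.-1 :> nat).
    by case: (nat_of_ord i) odd_i => // i' _; rewrite eqSS.
  by case: eqP; rewrite ?mul1r ?mul0r.
by case: eqP; rewrite ?mul1r ?mul0r.
Qed.

Lemma trmx_sympJ : (sympJ R N)^T = - sympJ R N.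
Proof.
apply/matrixP => i j; rewrite [LHS]mxE [RHS]mxE !sympJE.
have [->|ne_ij] := eqVneq i (partner_ord j).
  by rewrite partner_ordK eqxx /= odd_partner !mul1r signrN opprK.
have -> : (j == partner_ord i) = false.
  by apply: contraNF ne_ij => /eqP ->; rewrite partner_ordK.
by rewrite !mul0r oppr0.
Qed.

Lemma sympJ_sqr : sympJ R N *m sympJ R N = - 1%:M.
Proof.
apply/matrixP => i j; rewrite !mxE (bigD1 (partner_ord i)) //= big1 => [|k ne_ki].
  rewrite !sympJE eqxx partner_ordK mul1r addr0 odd_partner.
  by rewrite signrN mulr_natl mulrnAr mulrN -expr2 sqrr_sign mulNrn eq_sym.
by rewrite sympJE (negbTE ne_ki) !mul0r.
Qed.

End SymplecticForm.

Section HermitianParts.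
Variable R : rcfType.

Lemma adjC_mul (m n p : nat) (A : 'M[R[i]]_(m, n)) (B : 'M[R[i]]_(n, p)) :
  adjC (A *m B) = adjC B *m adjC A.
Proof.
apply/matrixP => i j; rewrite !mxE rmorph_sum; apply: eq_bigr => k _.
by rewrite !mxE rmorphM mulrC.
Qed.

Lemma adjCK (m n : nat) (A : 'M[R[i]]_(m, n)) : adjC (adjC A) = A.
Proof. by apply/matrixP => i j; rewrite !mxE conjcK. Qed.

Lemma adjC_gram (m n : nat) (C : 'M[R[i]]_(m, n)) :
  adjC (adjC C *m C) = adjC C *m C.
Proof. by rewrite adjC_mul adjCK. Qed.

Lemma trmx_mxRe_herm (n : nat) (H : 'M[R[i]]_n) :
  adjC H = H -> (mxRe H)^T = mxRe H.
Proof.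
move=> /matrixP hermH; apply/matrixP => i j; have := hermH i j.
by rewrite !mxE => <-; case: (H j i).
Qed.

Lemma trmx_mxIm_herm (n : nat) (H : 'M[R[i]]_n) :
  adjC H = H -> (mxIm H)^T = - mxIm H.
Proof.
move=> /matrixP hermH; apply/matrixP => i j; have := hermH i j.
by rewrite !mxE => <-; case: (H j i) => a b /=; rewrite opprK.
Qed.

End HermitianParts.

Theorem theorem1 (R : rcfType) (N : nat) (hN : (1 <= N)%N)
  (V : 'M[R]_(N.*2)) (hV : V^T = V) (C : 'M[R[i]]_(N.*2)) (l : nat) :
  let J := sympJ R N in
  let RC := mxRe (adjC C *m C) in
  let IC := mxIm (adjC C *m C) in
  let Vt := J *m V in
  2 * \tr (IC *m J *m mxpow Vt (l.*2.+1)) + \tr (RC *m J *m mxpow Vt l.*2) = 0.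
Proof.
move=> J RC IC Vt; rewrite -!mulmxA.
have hamVt := hamiltonian_mul_sym (trmx_sympJ R N) (sympJ_sqr R N) hV.
have trJVt k := trmx_mulJ_mxpow (trmx_sympJ R N) k hamVt.
have symJVt_odd : (J *m mxpow Vt l.*2.+1)^T = J *m mxpow Vt l.*2.+1.
  by have := trJVt l.*2.+1; rewrite -signr_odd /= odd_double /= scale1r.
have skewJVt_even : (J *m mxpow Vt l.*2)^T = - (J *m mxpow Vt l.*2).
  by have := trJVt l.*2; rewrite -signr_odd /= odd_double scaleN1r.
have skewIC : IC^T = - IC by apply/trmx_mxIm_herm/adjC_gram.
have symRC : RC^T = RC by apply/trmx_mxRe_herm/adjC_gram.
by rewrite mxtrace_mulC !mxtrace_mul_sym_skew // mulr0 add0r.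
Qed.
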